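(* Let $f_0$ be a probability density on $\mathbb{R}$ with $f_0(-z)=f_0(z)$ for all $z\in\mathbb{R}$ and $f_0$ strictly decreasing on $[0,\infty)$. Let $X$ have density $\frac{1}{\sigma}f_0\big(\frac{x-\mu}{\sigma}\big)$ with $\mu\in\mathbb{R}$, $\sigma>0$ unknown. Given $0<\alpha<1$, let $c>0$ satisfy $\int_0^c f_0(z)\,dz = \alpha/2$ (such $c$ exists). Then $$\inf_{\mu\in\mathbb{R},\,\sigma>0} P_{\mu,\sigma}\Big(\sigma \le \frac{|X|}{c}\Big) = 1-\alpha.$$ *)

From HB Require Import structures.
From mathcomp Require Import all_boot all_order all_algebra.
From mathcomp Require Import all_classical all_reals all_analysis.
Set Implicit Arguments. Unset Strict Implicit. Unset Printing Implicit Defensive.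
Import Order.TTheory GRing.Theory Num.Theory.
Local Open Scope classical_set_scope.
Local Open Scope ring_scope.

Definition is_prob_density (R : realType) (f0 : R -> R) : Prop :=
  [/\ measurable_fun setT f0,
      (forall x, 0 <= f0 x) &
      (\int[@lebesgue_measure R]_x (f0 x)%:E = 1)%E].

Definition loc_scale_prob (R : realType) (f0 : R -> R) (mu sigma : R)
    (A : set R) : \bar R :=
  (\int[@lebesgue_measure R]_(x in A) (sigma^-1 * f0 ((x - mu) / sigma))%:E)%E.

From HB Require Import structures.
From mathcomp Require Import all_boot all_order all_algebra.
From mathcomp Require Import all_classical all_reals all_analysis.
From mathcomp Require Import measurable_realfun.
From mathcomp Require Import ring lra.
Set Implicit Arguments. Unset Strict Implicit. Unset Printing Implicit Defensive.
Import Order.TTheory GRing.Theory Num.Theory.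
Local Open Scope classical_set_scope.
Local Open Scope ring_scope.

(* Standardizing z = (x - mu) / sigma turns the event sigma <= |X| / c into
   "z lies outside the window ]-c - mu/sigma, c - mu/sigma[", a window of length
   2c, so its probability is 1 minus the f0-mass of that window.  As f0 is
   symmetric and decreasing in |z|, a window of fixed length has the largest mass
   when centered at 0: for a window shifted left by m, the part left of -c is
   translated by 2c onto ]c - m, c] (or, when m >= 2c, the whole window by m onto
   ]-c, c[), which can only increase f0.  The centered window has mass
   2 (alpha/2) = alpha, whence the infimum 1 - alpha, attained at mu = 0. *)

Section lebesgue_change_of_variables.
Context (R : realType).
Local Notation mu := (@lebesgue_measure R).
Variable g : R -> R.
Hypotheses (mg : measurable_fun setT g) (g_ge0 : forall x, 0 <= g x).

(* The pushforward measure instance depends on a measurability proof, so it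
   cannot be inferred and is named explicitly. *)
Let pushforward_mu {phi : R -> R} (mphi : measurable_fun setT phi)
    : {measure set (measurableTypeR R) -> \bar R} :=
  @measure_function_pushforward__canonical__measure_function_Measure
    _ _ _ (measurableTypeR R) R mu phi mphi.

Lemma measurable_fun_standardize (m s : R) :
  measurable_fun setT (fun x : R => (x - m) / s).
Proof.
rewrite (_ : (fun x => _) = ( *%R s^-1) \o (fun x => x - m)); last first.
  by apply/funext => x /=; rewrite mulrC.
exact/measurableT_comp/measurable_funB.
Qed.

Lemma standardize_preimage_itv_oc (m s a b : R) : 0 < s ->
  (fun x : R => (x - m) / s) @^-1` `]a, b] = `]s * a + m, s * b + m]%classic.
Proof.
move=> s0; apply/seteqP; split => x /=; rewrite !in_itv/= ler_pdivrMr// ltr_pdivlMr//.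
  by move=> /andP[? ?]; apply/andP; split; lra.
by move=> /andP[? ?]; apply/andP; split; lra.
Qed.

Lemma lebesgue_measure_standardize (m s : R) (A : set R) : 0 < s -> measurable A ->
  mu A = (s^-1%:E * mu ((fun x => (x - m) / s)%R @^-1` A))%E.
Proof.
move=> s0 mA; have s'0 : 0 <= s^-1 by rewrite invr_ge0 ltW.
rewrite (@lebesgue_measure_unique R (mscale (NngNum s'0)
  (pushforward_mu (measurable_fun_standardize m s))
  : {measure set (measurableTypeR R) -> \bar R}) _ A mA)//.
move=> _ [[a b] _ <-] /=; rewrite /mscale/= /pushforward.
rewrite standardize_preimage_itv_oc// !lebesgue_measure_itv/= !lte_fin ltrD2r ltr_pM2l//.
case: ifPn => _; last by rewrite mule0.
rewrite -!EFinD -EFinM; congr EFin.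
by rewrite opprD addrACA subrr addr0 -mulrBr mulKf// gt_eqF.
Qed.

Lemma ge0_integral_standardize (m s : R) (B : set R) : 0 < s -> measurable B ->
  (\int[mu]_(x in (fun x => (x - m) / s)%R @^-1` B) (s^-1 * g ((x - m) / s))%:E
   = \int[mu]_(z in B) (g z)%:E)%E.
Proof.
move=> s0 mB; have s'0 : 0 <= s^-1 by rewrite invr_ge0 ltW.
have mstd := measurable_fun_standardize m s.
rewrite (@eq_measure_integral _ (measurableTypeR R) _ B (mscale (NngNum s'0) (pushforward_mu mstd)
  : {measure set (measurableTypeR R) -> \bar R})); last first.
  by move=> A mA _; exact: lebesgue_measure_standardize.
rewrite ge0_integral_mscale//=; last 2 first.
- exact/measurable_EFinP/measurable_funTS.
- by move=> z _; rewrite lee_fin.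
rewrite ge0_integral_pushforward//=; last 2 first.
- exact/measurable_EFinP/measurable_funTS.
- by move=> z _; rewrite lee_fin.
under eq_integral do rewrite EFinM.
rewrite ge0_integralZl_EFin//.
- by rewrite -[X in measurable X]setTI; exact: mstd.
- by move=> x _; rewrite lee_fin.
- exact/measurable_funTS/measurableT_comp/measurableT_comp.
Qed.

Lemma ge0_integral_shift (t : R) (B : set R) : measurable B ->
  (\int[mu]_(x in (fun x => x + t)%R @^-1` B) (g (x + t))%:E
   = \int[mu]_(z in B) (g z)%:E)%E.
Proof.
move=> mB; rewrite -(ge0_integral_standardize (- t) ltr01 mB).
have std_shift : (fun x : R => (x - - t) / 1) = (fun x => x + t).
  by apply/funext => x; rewrite opprK invr1 mulr1.
by rewrite std_shift; apply: eq_integral => x _; rewrite invr1 mul1r opprK mulr1.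
Qed.

Lemma ge0_integral_reflect (B : set R) : measurable B ->
  (\int[mu]_(x in (fun x => - x)%R @^-1` B) (g (- x))%:E
   = \int[mu]_(z in B) (g z)%:E)%E.
Proof.
move=> mB; have mN : measurable_fun setT (fun x : R => - x).
  exact: continuous_measurable_fun opp_continuous.
transitivity (\int[pushforward_mu mN]_(z in B) (g z)%:E)%E.
  rewrite ge0_integral_pushforward//=.
  - exact/measurable_EFinP/measurable_funTS.
  - by move=> z _; rewrite lee_fin.
by apply: eq_measure_integral => /= A mA _; rewrite lebesgue_measureN.
Qed.

Lemma ge0_le_integral_shift (t : R) (A B : set R) : measurable B ->
  A = (fun x => x + t) @^-1` B -> (forall x, A x -> g x <= g (x + t)) ->
  (\int[mu]_(x in A) (g x)%:E <= \int[mu]_(z in B) (g z)%:E)%E.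
Proof.
move=> mB AB gle; rewrite -(ge0_integral_shift t mB).
have mA : measurable A.
  by rewrite AB -[X in measurable X]setTI; exact: measurable_funD.
rewrite -AB; apply: ge0_le_integral => //.
- by move=> x _; rewrite lee_fin.
- exact/measurable_EFinP/measurable_funTS.
- apply/measurable_EFinP/measurable_funTS.
  by apply: measurableT_comp => //; exact: measurable_funD.
Qed.

End lebesgue_change_of_variables.

Section symmetric_integrand.
Context (R : realType).
Local Notation mu := (@lebesgue_measure R).
Variable g : R -> R.
Hypotheses (mg : measurable_fun setT g) (g_ge0 : forall x, 0 <= g x).
Hypothesis gN : forall x, g (- x) = g x.

Lemma ge0_integral_itvNoo (a b : R) :
  (\int[mu]_(x in `]a, b[) (g x)%:E = \int[mu]_(x in `](- b)%R, (- a)%R[) (g x)%:E)%E.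
Proof.
have -> : `]a, b[%classic = (fun x => - x) @^-1` `](- b), (- a)[.
  by apply/seteqP; split => x /=; rewrite !in_itv/= => /andP[? ?];
    apply/andP; split; lra.
under eq_integral do rewrite -gN.
exact/ge0_integral_reflect.
Qed.

Lemma ge0_integral_sym_itv (c : R) : 0 < c ->
  (\int[mu]_(x in `](- c)%R, c[) (g x)%:E
   = \int[mu]_(x in `[0%R, c]) (g x)%:E + \int[mu]_(x in `[0%R, c]) (g x)%:E)%E.
Proof.
move=> c0.
rewrite (@itv_bndbnd_setU _ _ _ (BLeft 0%R)) ?bnd_simp ?oppr_lt0 ?ltW//.
rewrite ge0_integral_setU//; last 3 first.
- exact/measurable_EFinP/measurable_funTS.
- by move=> x _; rewrite lee_fin.
- by apply: lt_disjoint => x y; rewrite !in_itv/= => /andP[_ ?] /andP[? _]; lra.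
rewrite [X in (_ + X)%E]integral_itv_bndo_bndc; last exact/measurable_EFinP/measurable_funTS.
rewrite ge0_integral_itvNoo oppr0 opprK.
by rewrite (integral_itv_bndoo true false)//; exact/measurable_EFinP/measurable_funTS.
Qed.

End symmetric_integrand.

Section symmetric_unimodal_integrand.
Context (R : realType).
Local Notation mu := (@lebesgue_measure R).
Variable g : R -> R.
Hypotheses (mg : measurable_fun setT g) (g_ge0 : forall x, 0 <= g x).
Hypothesis g_unimodal : forall x y, `|y| <= `|x| -> g x <= g y.

Lemma unimodal_symmetric x : g (- x) = g x.
Proof. by apply/le_anti; rewrite !g_unimodal// normrN. Qed.

Lemma le_integral_itv_shift_far (c m : R) : 2 * c <= m ->
  (\int[mu]_(x in `](- c - m)%R, (c - m)%R[) (g x)%:E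
   <= \int[mu]_(x in `](- c)%R, c[) (g x)%:E)%E.
Proof.
move=> m2c; apply: (ge0_le_integral_shift mg g_ge0 (t := m)) => //.
  by apply/seteqP; split => x /=; rewrite !in_itv/= => /andP[? ?];
    apply/andP; split; lra.
move=> x /=; rewrite in_itv/= => /andP[? ?]; apply: g_unimodal.
by rewrite (ltr0_norm (x := x)); [rewrite ler_norml; apply/andP; split|]; lra.
Qed.

Lemma le_integral_itv_shift_near (c m : R) : 0 <= m < 2 * c ->
  (\int[mu]_(x in `](- c - m)%R, (c - m)%R[) (g x)%:E
   <= \int[mu]_(x in `](- c)%R, c[) (g x)%:E)%E.
Proof.
move=> /andP[m0 m2c].
have mgE D : measurable_fun D (fun x => (g x)%:E).
  exact/measurable_EFinP/measurable_funTS.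
have far_part : (\int[mu]_(x in `](- c - m)%R, (- c)%R]) (g x)%:E
    <= \int[mu]_(x in `](c - m)%R, c]) (g x)%:E)%E.
  apply: (ge0_le_integral_shift mg g_ge0 (t := 2 * c)) => //.
    by apply/seteqP; split => x /=; rewrite !in_itv/= => /andP[? ?];
      apply/andP; split; lra.
  move=> x /=; rewrite in_itv/= => /andP[? ?]; apply: g_unimodal.
  by rewrite (ltr0_norm (x := x)); [rewrite ler_norml; apply/andP; split|]; lra.
have centered_split : (\int[mu]_(x in `](- c)%R, c]) (g x)%:E
    = \int[mu]_(x in `](- c)%R, (c - m)%R]) (g x)%:E
      + \int[mu]_(x in `](c - m)%R, c]) (g x)%:E)%E.
  rewrite (@itv_bndbnd_setU _ _ _ (BRight (c - m)%R)) ?bnd_simp; [|lra|lra].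
  rewrite ge0_integral_setU//.
  - exact: mgE.
  - by move=> x _; rewrite lee_fin.
  - by apply: lt_disjoint => x y; rewrite !in_itv/= => /andP[_ ?] /andP[? _]; lra.
rewrite (@itv_bndbnd_setU _ _ _ (BRight (- c)%R)) ?bnd_simp; [|lra|lra].
rewrite ge0_integral_setU//; last 3 first.
- exact: mgE.
- by move=> x _; rewrite lee_fin.
- by apply: lt_disjoint => x y; rewrite !in_itv/= => /andP[_ ?] /andP[? _]; lra.
rewrite integral_itv_bndo_bndc; last exact: mgE.
rewrite [X in (_ <= X)%E]integral_itv_bndo_bndc; last exact: mgE.
by rewrite centered_split addeC leeD2l.
Qed.

Lemma le_integral_itv_centered (c m : R) : 0 < c ->
  (\int[mu]_(x in `](- c - m)%R, (c - m)%R[) (g x)%:E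
   <= \int[mu]_(x in `](- c)%R, c[) (g x)%:E)%E.
Proof.
move=> c0; wlog m0 : m / 0 <= m.
  move=> le_nonneg; have [|m_lt0] := leP 0 m; first exact: le_nonneg.
  rewrite (ge0_integral_itvNoo mg g_ge0 unimodal_symmetric).
  have -> : `](- (c - m))%R, (- (- c - m))%R[%classic
      = `](- c - - m)%R, (c - - m)%R[%classic :> set R.
    by rewrite opprB opprD !opprK [(- c + m)%R]addrC.
  by apply: le_nonneg; rewrite oppr_ge0 ltW.
have [m_lt2c|m_ge2c] := ltP m (2 * c).
- by apply: le_integral_itv_shift_near; rewrite m0.
- exact: le_integral_itv_shift_far.
Qed.

End symmetric_unimodal_integrand.

Lemma symmetric_decreasing_unimodal (R : realDomainType) (f : R -> R) :
  (forall z, f (- z) = f z) -> (forall x y, 0 <= x -> x < y -> f y < f x) ->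
  forall x y, `|y| <= `|x| -> f x <= f y.
Proof.
move=> fN f_decr.
have f_norm z : f `|z| = f z.
  by have [z0|z0] := leP 0 z; [rewrite ger0_norm|rewrite ltr0_norm// fN].
move=> x y; rewrite -(f_norm x) -(f_norm y) le_eqVlt => /predU1P[->//|lt_yx].
exact/ltW/f_decr.
Qed.

Lemma abs_ge_scale_preimage (R : realFieldType) (c mu sigma : R) :
  0 < c -> 0 < sigma ->
  [set x | sigma <= `|x| / c]
  = (fun x => (x - mu) / sigma) @^-1` ~` `](- c - mu / sigma), (c - mu / sigma)[.
Proof.
move=> c0 s0; apply/seteqP; split => x /=; set z := (x - mu) / sigma;
  have -> : x = sigma * (z + mu / sigma) by rewrite /z -mulrDl subrK mulrC divfK ?gt_eqF.
all: rewrite normrM gtr0_norm// ler_pdivlMr// ler_pM2l// in_itv/=.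
- by rewrite ler_normr => /orP[? | ?] /andP[? ?]; lra.
- move=> z_out; rewrite leNgt ltr_norml; apply/negP => /andP[? ?].
  by apply: z_out; apply/andP; split; lra.
Qed.

Lemma loc_scale_prob_abs_ge (R : realType) (f : R -> R) (c mu sigma : R) :
  is_prob_density f -> 0 < c -> 0 < sigma ->
  loc_scale_prob f mu sigma [set x | sigma <= `|x| / c]
  = (1 - \int[@lebesgue_measure R]_(z in `](- c - mu / sigma)%R, (c - mu / sigma)%R[)
           (f z)%:E)%E.
Proof.
move=> [mf f_ge0 f_total] c0 s0.
set I := `](- c - mu / sigma)%R, (c - mu / sigma)%R[%classic.
have mI : measurable I by exact: measurable_itv.
rewrite /loc_scale_prob (abs_ge_scale_preimage mu)// (ge0_integral_standardize mf f_ge0)//;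
  last exact: measurableC.
have split_total : (\int[lebesgue_measure]_(z in ~` I) (f z)%:E
    + \int[lebesgue_measure]_(z in I) (f z)%:E = 1)%E.
  rewrite -ge0_integral_setU ?setvU//.
  - exact: measurableC.
  - exact/measurable_EFinP.
  - by move=> x _; rewrite lee_fin.
  - by apply/disj_setPCr.
have I_fin : (\int[lebesgue_measure]_(z in I) (f z)%:E)%E \is a fin_num.
  rewrite ge0_fin_numE; last by apply: integral_ge0 => x _; rewrite lee_fin.
  apply: le_lt_trans (ltry 1); rewrite -split_total leeDr//.
  by apply: integral_ge0 => x _; rewrite lee_fin.
by rewrite -split_total addeK.
Qed.

Theorem theorem3p1 (R : realType) (f0 : R -> R) (alpha c : R) :
  is_prob_density f0 ->
  (forall z, f0 (- z) = f0 z) ->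
  (forall x y, 0 <= x -> x < y -> f0 y < f0 x) ->
  0 < alpha < 1 ->
  0 < c ->
  (\int[@lebesgue_measure R]_(z in `[0%R, c]) (f0 z)%:E)%E = (alpha / 2)%:E ->
  ereal_inf [set p | exists mu sigma : R, 0 < sigma /\
                  p = loc_scale_prob f0 mu sigma [set x | sigma <= `|x| / c]]
  = (1 - alpha)%:E.
Proof.
move=> f0_density f0N f0_decr _ c0 f0_half.
have [mf0 f0_ge0 _] := f0_density.
have f0_unimodal := symmetric_decreasing_unimodal f0N f0_decr.
have f0_center : (\int[@lebesgue_measure R]_(z in `](- c)%R, c[) (f0 z)%:E)%E
    = alpha%:E.
  by rewrite (ge0_integral_sym_itv mf0 f0_ge0 f0N c0) f0_half -EFinD -splitr.
apply/le_anti/andP; split.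
- apply: ereal_inf_lbound; exists 0, 1; split => //.
  by rewrite loc_scale_prob_abs_ge// mul0r !subr0 f0_center EFinB.
- apply: le_ereal_inf_tmp => _ [mu [sigma [s0 ->]]].
  rewrite loc_scale_prob_abs_ge// EFinB leeB// -f0_center.
  exact: le_integral_itv_centered.
Qed.
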